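(* Let $(X,d)$ be a pointed metric space and let $((x_i,y_i))_{i\in I}$ be a Lipschitz interpolating family in $\widetilde X$ for $\mathrm{Lip}_0(X)$. Then there exists $\delta>0$ (depending on the family) such that every family $((u_i,v_i))_{i\in I}$ in $\widetilde X$ satisfying $\rho((x_i,y_i),(u_i,v_i))<\delta$ for all $i\in I$ is also Lipschitz interpolating for $\mathrm{Lip}_0(X)$.
   Context: All spaces are real. $(X,d)$ is a metric space with base point $0$, $\widetilde{X}=\{(x,y)\in X\times X: x\neq y\}$. $\mathrm{Lip}_0(X)$ is the Banach space of Lipschitz $f:X\to\mathbb{R}$ with $f(0)=0$, normed by $\|f\|=\sup_{(x,y)\in\widetilde X}|f(x)-f(y)|/d(x,y)$. For $x\in X$, $\delta_x\in\mathrm{Lip}_0(X)^*$ is $\delta_x(f)=f(x)$; for $(x,y)\in\widetilde X$, $m_{x,y}=(\delta_x-\delta_y)/d(x,y)\in\mathrm{Lip}_0(X)^*$. The Lipschitz-molecular metric on $\widetilde X$ is $\rho((x,y),(u,v))=\|m_{x,y}-m_{u,v}\|$ (dual norm). For a family $((x_i,y_i))_{i\in I}$ in $\widetilde X$, its Lipschitz interpolating operator is $T:\mathrm{Lip}_0(X)\to\ell_\infty(I)$, $T(f)=\big((f(x_i)-f(y_i))/d(x_i,y_i)\big)_{i\in I}$, and the family is Lipschitz interpolating for $\mathrm{Lip}_0(X)$ if $T$ is surjective. *)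

From mathcomp Require Import all_boot all_order all_algebra.
From mathcomp Require Import all_classical all_reals.
Set Implicit Arguments. Unset Strict Implicit. Unset Printing Implicit Defensive.
Import Order.TTheory GRing.Theory Num.Theory.
Local Open Scope ring_scope.
Local Open Scope classical_set_scope.

Section Lip.
Variable R : realType.

Definition is_metric (X : Type) (d : X -> X -> R) : Prop :=
  [/\ forall x y, 0 <= d x y,
      forall x y, d x y = 0 <-> x = y,
      forall x y, d x y = d y x &
      forall x y z, d x z <= d x y + d y z].

Variables (X : Type) (d : X -> X -> R) (x0 : X).

Definition is_lip0 (f : X -> R) : Prop :=
  f x0 = 0 /\ exists L : R, forall x y, `|f x - f y| <= L * d x y.

Definition lip0_ball (f : X -> R) : Prop :=
  is_lip0 f /\ forall x y, x <> y -> `|f x - f y| / d x y <= 1.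

Definition molecule (p : X * X) (f : X -> R) : R :=
  (f p.1 - f p.2) / d p.1 p.2.

Definition rho (p q : X * X) : R :=
  sup [set r : R | exists f, lip0_ball f /\ r = `|molecule p f - molecule q f| ].

(* the family (p i)_{i in I} (in X~) is Lipschitz interpolating for Lip_0(X):
   T : Lip_0(X) -> l_oo(I) is surjective *)
Definition lip_interpolating (I : Type) (p : I -> X * X) : Prop :=
  forall a : I -> R, (exists M : R, forall i, `|a i| <= M) ->
    exists f, is_lip0 f /\ forall i, molecule (p i) f = a i.

End Lip.

From mathcomp Require Import all_boot all_order all_algebra.
From mathcomp Require Import all_classical all_reals.
From mathcomp Require Import ring lra.
Import Order.TTheory GRing.Theory Num.Theory.
Local Open Scope ring_scope.

(* Open mapping argument.  Surjectivity of T and a diagonal (Baire-type)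
   construction give K > 0 such that every a with |a| <= s is approximated
   within s/2 by some T f with Lip(f) <= K s; summing the geometric series of
   successive corrections makes the interpolation exact with constant 2K.
   Since |m_p f - m_q f| <= rho(p, q) Lip(f), a family q with
   rho(p_i, q_i) < 1/(4K) is approximately interpolating with constant 2K,
   hence interpolating. *)

Section GeometricBounds.
Set Implicit Arguments. Unset Strict Implicit.
Variable R : realType.
Local Open Scope classical_set_scope.

Lemma geometric_cauchy_limit (u : nat -> R) (c t : R) : 0 <= c -> 0 < t < 1 ->
  (forall n, `|u n.+1 - u n| <= c * t ^+ n) ->
  exists l, forall n, `|l - u n| <= c * t ^+ n / (1 - t).
Proof.
move=> c0 /andP[t0 t1] du.
pose e n := c * t ^+ n / (1 - t).
have e0 n : 0 <= e n.
  by rewrite /e divr_ge0 ?mulr_ge0 ?exprn_ge0 ?subr_ge0 ?(ltW t0) ?(ltW t1).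
have eS n : e n - e n.+1 = c * t ^+ n.
  by rewrite /e exprS; field; rewrite subr_eq0 gt_eqF.
(* The limit is the supremum of the nondecreasing lower envelope [lo],
   which every term of the nonincreasing upper envelope [hi] bounds. *)
pose lo n := u n - e n; pose hi n := u n + e n.
have lo_mono : {homo lo : m n / (m <= n)%N >-> m <= n}.
  apply: homo_leq => [//|? ? ?|n]; first exact: le_trans.
  by have := du n; have := eS n; rewrite /lo ler_norml => ? /andP[]; lra.
have hi_mono : {homo hi : m n / (m <= n)%N >-> n <= m}.
  apply: homo_leq => [//|y x z xy zy|n]; first exact: le_trans zy xy.
  by have := du n; have := eS n; rewrite /hi ler_norml => ? /andP[]; lra.
have lo_hi k n : lo k <= hi n.
  have [kn|/ltnW nk] := leqP k n.
    by apply: le_trans (lo_mono _ _ kn) _; rewrite /lo /hi; have := e0 n; lra.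
  by apply: le_trans (hi_mono _ _ nk); rewrite /lo /hi; have := e0 k; lra.
have hi_ub n : ubound (range lo) (hi n) by move=> _ [k _ <-]; exact: lo_hi.
exists (sup (range lo)) => n; rewrite ler_norml.
have : lo n <= sup (range lo) by apply: ub_le_sup; [exists (hi 0%N) | exists n].
have : sup (range lo) <= hi n by apply: ge_sup; [exists (lo 0%N), 0%N | ].
by rewrite /lo /hi /e; lra.
Qed.

Lemma le_of_le_add_halfn (a b c : R) : (forall n, a <= b + c / 2 ^+ n) -> a <= b.
Proof.
move=> hab; rewrite leNgt; apply/negP => ba.
have [c0|c_gt0] := lerP c 0; first by have := hab 0%N; rewrite expr0 divr1; lra.
have ab0 : 0 < a - b by rewrite subr_gt0.
pose N := Num.bound (c / (a - b)).
have hN : c / (a - b) < N%:R by apply: archi_boundP; rewrite divr_ge0 // ltW.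
have N2N : N%:R < 2 ^+ N :> R by rewrite -natrX ltr_nat ltn_expl.
have : c / 2 ^+ N < a - b.
  rewrite ltr_pdivrMr ?exprn_gt0 //.
  move: hN; rewrite ltr_pdivrMr // => /lt_trans; apply.
  by rewrite mulrC ltr_pM2l.
by have := hab N; lra.
Qed.

Lemma sum_halfn (c : R) n : \sum_(k < n) c / 2 ^+ k = 2 * c - 2 * c / 2 ^+ n.
Proof.
elim: n => [|n IH]; first by rewrite big_ord0 expr0 divr1 subrr.
by rewrite big_ord_recr /= IH exprS; field; rewrite expf_neq0 ?pnatr_eq0.
Qed.

End GeometricBounds.

Section LipschitzInterpolation.
Set Implicit Arguments. Unset Strict Implicit.
Variables (R : realType) (X : Type) (d : X -> X -> R) (x0 : X).
Hypothesis d_metric : is_metric d.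

Lemma d_ge0 x y : 0 <= d x y. Proof. by case: d_metric. Qed.

Lemma d_xx x : d x x = 0. Proof. by case: d_metric => _ /(_ x x) [_ ->]. Qed.

Lemma d_gt0 x y : x <> y -> 0 < d x y.
Proof.
move=> xy; rewrite lt_def d_ge0 andbT; apply/eqP => dxy0; apply: xy.
by case: d_metric => _ /(_ x y)[+ _] _ _; apply.
Qed.

Definition lip0_le (f : X -> R) (K : R) : Prop :=
  f x0 = 0 /\ forall x y, `|f x - f y| <= K * d x y.

Lemma lip0_le_trans f K K' : K <= K' -> lip0_le f K -> lip0_le f K'.
Proof.
move=> KK' [f0 fK]; split=> // x y; apply: le_trans (fK x y) _.
by rewrite ler_wpM2r ?d_ge0.
Qed.

Lemma lip0_leZ f K c : lip0_le f K -> lip0_le (fun x => c * f x) (`|c| * K).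
Proof.
move=> [f0 fK]; split=> [|x y]; first by rewrite f0 mulr0.
by rewrite -mulrBr normrM -mulrA ler_wpM2l.
Qed.

Lemma lip0_leD f g K L :
  lip0_le f K -> lip0_le g L -> lip0_le (fun x => f x + g x) (K + L).
Proof.
move=> [f0 fK] [g0 gL]; split=> [|x y]; first by rewrite f0 g0 addr0.
rewrite opprD addrACA mulrDl (le_trans (ler_normD _ _)) //.
exact: lerD.
Qed.

Lemma lip0_leB f g K L :
  lip0_le f K -> lip0_le g L -> lip0_le (fun x => f x - g x) (K + L).
Proof.
move=> fK [g0 gL]; apply: lip0_leD fK _; split=> [|x y]; first by rewrite g0 oppr0.
by rewrite -opprD normrN.
Qed.

Lemma lip0_le_sum (f : nat -> X -> R) (K : nat -> R) n :
  (forall k, lip0_le (f k) (K k)) ->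
  lip0_le (fun x => \sum_(k < n) f k x) (\sum_(k < n) K k).
Proof.
move=> fK; elim: n => [|n IH].
  by split=> [|x y]; rewrite !big_ord0 // subrr normr0 mul0r.
rewrite big_ord_recr /=; under eq_fun do rewrite big_ord_recr /=.
exact: lip0_leD.
Qed.

Lemma lip0_le_lip0 f K : lip0_le f K -> is_lip0 d x0 f.
Proof. by move=> [f0 fK]; split=> //; exists K. Qed.

Lemma lip0_le_nat f : is_lip0 d x0 f -> exists N : nat, lip0_le f N%:R.
Proof.
move=> [f0 [L fL]]; exists (Num.bound `|L|); apply: lip0_le_trans (conj f0 fL).
exact: le_trans (ler_norm L) (ltW (archi_boundP (normr_ge0 L))).
Qed.

Lemma lip0_le1_ball f : lip0_le f 1 -> lip0_ball d x0 f.
Proof.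
move=> f1; split; first exact: lip0_le_lip0 f1.
by move=> x y xy; rewrite ler_pdivrMr ?d_gt0 // mul1r -[d x y]mul1r; apply: f1.2.
Qed.

Lemma moleculeB p f g :
  molecule d p (fun x => f x - g x) = molecule d p f - molecule d p g.
Proof. by rewrite /molecule; ring. Qed.

Lemma moleculeZ p c f : molecule d p (fun x => c * f x) = c * molecule d p f.
Proof. by rewrite /molecule -mulrBr mulrA. Qed.

Lemma molecule_sum p (f : nat -> X -> R) n :
  molecule d p (fun x => \sum_(k < n) f k x) = \sum_(k < n) molecule d p (f k).
Proof. by rewrite /molecule -sumrB mulr_suml. Qed.

Lemma norm_molecule p f : `|molecule d p f| = `|f p.1 - f p.2| / d p.1 p.2.
Proof. by rewrite /molecule normrM normfV (ger0_norm (d_ge0 _ _)). Qed.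

Lemma molecule_ball p f : lip0_ball d x0 f -> `|molecule d p f| <= 1.
Proof.
move=> [_ f1]; rewrite norm_molecule.
have [p12|] := pselect (p.1 = p.2); last exact: f1.
by rewrite p12 d_xx invr0 mulr0.
Qed.

Lemma molecule_ball_rho p q f :
  lip0_ball d x0 f -> `|molecule d p f - molecule d q f| <= rho d x0 p q.
Proof.
move=> f1; apply: ub_le_sup; last by exists f.
exists 2 => _ [g [g1 ->]]; apply: le_trans (ler_normB _ _) _.
by have := molecule_ball p g1; have := molecule_ball q g1; lra.
Qed.

Lemma molecule_rho p q f K : 0 < K -> lip0_le f K ->
  `|molecule d p f - molecule d q f| <= rho d x0 p q * K.
Proof.
move=> K0 fK; have Kf1 : lip0_le (fun x => K^-1 * f x) 1.
  by apply: lip0_le_trans (lip0_leZ _ fK); rewrite gtr0_norm ?invr_gt0 ?mulVf ?gt_eqF.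
have := molecule_ball_rho p q (lip0_le1_ball Kf1).
by rewrite !moleculeZ -mulrBr normrM gtr0_norm ?invr_gt0 // ler_pdivrMl // mulrC.
Qed.

Lemma molecule_dist p f g e : (forall x, `|f x - g x| <= e * d x x0) ->
  `|molecule d p f - molecule d p g| <= e * (d p.1 x0 + d p.2 x0) / d p.1 p.2.
Proof.
move=> fg; rewrite -moleculeB norm_molecule ler_wpM2r ?invr_ge0 ?d_ge0 //.
by rewrite mulrDr (le_trans (ler_normB _ _)) ?lerD.
Qed.

Lemma lip0_series (f : nat -> X -> R) c : 0 <= c ->
  (forall n, lip0_le (f n) (c / 2 ^+ n)) ->
  exists F, lip0_le F (2 * c) /\
    forall n x, `|F x - \sum_(k < n) f k x| <= 2 * c / 2 ^+ n * d x x0.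
Proof.
move=> c0 fc.
have half01 : 0 < (2^-1 : R) < 1 by rewrite invr_gt0 ltr0n invf_lt1 ?ltr1n.
have step x n :
    `|\sum_(k < n.+1) f k x - \sum_(k < n) f k x| <= c * d x x0 * 2^-1 ^+ n.
  rewrite big_ord_recr /= addrAC subrr add0r -[f n x]subr0 -(fc n).1.
  by rewrite exprVn mulrAC; exact: (fc n).2.
have [F FS] := choice (fun x =>
  geometric_cauchy_limit (mulr_ge0 c0 (d_ge0 x x0)) half01 (step x)).
have FSn n x : `|F x - \sum_(k < n) f k x| <= 2 * c / 2 ^+ n * d x x0.
  have -> : 2 * c / 2 ^+ n * d x x0 = c * d x x0 * 2^-1 ^+ n / (1 - 2^-1).
    by rewrite exprVn; field; rewrite expf_neq0 ?pnatr_eq0.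
  exact: FS.
exists F; split=> //; split.
  apply/eqP; rewrite -normr_le0.
  by have := FSn 0%N x0; rewrite big_ord0 subr0 d_xx mulr0.
move=> x y; apply: (@le_of_le_add_halfn _ _ _ (2 * c * (d x x0 + d y x0))) => n.
set S := fun x => \sum_(k < n) f k x.
have Sxy : `|S x - S y| <= 2 * c * d x y.
  apply: le_trans ((lip0_le_sum n fc).2 x y) _; rewrite ler_wpM2r ?d_ge0 //.
  by rewrite sum_halfn gerBl divr_ge0 ?mulr_ge0 ?exprn_ge0.
have -> : F x - F y = (F x - S x) - (F y - S y) + (S x - S y) by ring.
apply: le_trans (ler_normD _ _) _; rewrite addrC lerD //.
apply: le_trans (ler_normB _ _) _.
have -> : 2 * c * (d x x0 + d y x0) / 2 ^+ n =
          2 * c / 2 ^+ n * d x x0 + 2 * c / 2 ^+ n * d y x0 by ring.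
exact: lerD (FSn n x) (FSn n y).
Qed.

Variable I : Type.
Implicit Types (p q : I -> X * X) (a y : I -> R).

Definition approx_around p L y r : Prop :=
  forall z, (forall i, `|z i - y i| <= r) ->
    exists f, lip0_le f L /\ forall i, `|z i - molecule d (p i) f| <= r / 2.

Definition approx_interpolating_with p K : Prop :=
  forall s a, 0 < s -> (forall i, `|a i| <= s) ->
    exists f, lip0_le f (K * s) /\ forall i, `|a i - molecule d (p i) f| <= s / 2.

Definition interpolating_with p K : Prop :=
  forall s a, 0 < s -> (forall i, `|a i| <= s) ->
    exists f, lip0_le f (K * s) /\ forall i, molecule d (p i) f = a i.

Lemma approx_around0 p L y r : approx_around p L y r -> approx_around p L (fun=> 0) r.
Proof.
move=> hy w w_le.
have {w_le} hw i : `|w i| <= r by rewrite -[w i]subr0; exact: w_le.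
have [f1 [f1L f1w]] := hy (fun i => y i + w i)
  ltac:(by move=> i; rewrite addrAC subrr add0r).
have [f2 [f2L f2w]] := hy (fun i => y i - w i)
  ltac:(by move=> i; rewrite addrAC subrr add0r normrN).
(* (f1 - f2) / 2 approximates w, where f1, f2 approximate y + w, y - w. *)
exists (fun x => 2^-1 * (f1 x - f2 x)); split.
  apply: lip0_le_trans (lip0_leZ _ (lip0_leB f1L f2L)).
  rewrite ger0_norm ?invr_ge0 ?ler0n //.
  by have -> : 2^-1 * (L + L) = L by field.
move=> i; rewrite moleculeZ moleculeB.
set m1 := molecule d (p i) f1; set m2 := molecule d (p i) f2.
have -> : w i - 2^-1 * (m1 - m2) = 2^-1 * ((y i + w i - m1) - (y i - w i - m2)).
  by field.
rewrite normrM ger0_norm ?invr_ge0 ?ler0n //.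
have := ler_normB (y i + w i - m1) (y i - w i - m2).
by have := f1w i; have := f2w i; lra.
Qed.

Lemma approx_around_scale p L r : 0 < r ->
  approx_around p L (fun=> 0) r -> approx_interpolating_with p (L / r).
Proof.
move=> r0 hL s a s0 sa; have rs0 : 0 < r / s by rewrite divr_gt0.
have ra i : `|r / s * a i - 0| <= r.
  rewrite subr0 normrM gtr0_norm //.
  by apply: le_trans (ler_wpM2l (ltW rs0) (sa i)) _; rewrite divfK ?gt_eqF.
have [f [fL fa]] := hL _ ra.
exists (fun x => s / r * f x); split.
  apply: lip0_le_trans (lip0_leZ _ fL).
  by rewrite gtr0_norm ?divr_gt0 // mulrAC [s * L]mulrC [in X in _ <= X]mulrAC.
move=> i; rewrite moleculeZ.
have -> : a i - s / r * molecule d (p i) f = s / r * (r / s * a i - molecule d (p i) f).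
  by field; rewrite !gt_eqF.
rewrite normrM gtr0_norm ?divr_gt0 //; apply: le_trans (ler_wpM2l _ (fa i)) _.
  by rewrite ltW ?divr_gt0.
by rewrite mulrA divfK ?gt_eqF.
Qed.

Lemma lip_interpolating_approx_around p : lip_interpolating d x0 p ->
  exists (m : nat) r, 0 < r /\ approx_around p m.+1%:R (fun=> 0) r.
Proof.
(* Otherwise pick Y_(n+1) within 4^-n of Y_n that no (n+1)-Lipschitz f
   approximates; the limit y is some T f, which approximates Y_(N+1) too well. *)
move=> p_interp; apply: contrapT => no_approx.
pose t : R := 4^-1.
have t0 : 0 < t by rewrite invr_gt0.
have t01 : 0 < t < 1 by rewrite t0 invf_lt1 ?ltr1n.
have away (ny : nat * (I -> R)) : exists z,
    (forall i, `|z i - ny.2 i| <= 1 * t ^+ ny.1) /\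
    ~ exists f, lip0_le f ny.1.+1%:R /\
        forall i, `|z i - molecule d (p i) f| <= t ^+ ny.1 / 2.
  case: ny => n y /=.
  have : ~ approx_around p n.+1%:R y (t ^+ n).
    move=> /approx_around0 hy; apply: no_approx.
    by exists n, (t ^+ n); split=> //; exact: exprn_gt0.
  by move=> /existsNP[z /not_implyP[zy nf]]; exists z; split=> // i; rewrite mul1r.
have [g gP] := choice away.
pose fix Y n := if n is k.+1 then g (k, Y k) else (fun=> 0).
have [y yY] := choice (fun i => geometric_cauchy_limit (u := fun n => Y n i)
  ler01 t01 (fun n => (gP (n, Y n)).1 i)).
have [f [f_lip fy]] : exists f, is_lip0 d x0 f /\ forall i, molecule d (p i) f = y i.
  apply: p_interp; exists (1 - t)^-1 => i.
  by have := yY i 0%N; rewrite /= subr0 expr0 !mul1r.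
have [N fN] := lip0_le_nat f_lip.
apply: (gP (N, Y N)).2; exists f; split.
  by apply: lip0_le_trans fN; rewrite ler_nat.
move=> i; rewrite fy distrC; apply: le_trans (yY i N.+1) _.
have -> : 1 * t ^+ N.+1 / (1 - t) = t ^+ N / 3 by rewrite exprS /t; field.
by have := exprn_ge0 N (ltW t0); lra.
Qed.

Lemma lip_interpolating_approx p : lip_interpolating d x0 p ->
  exists K, 0 < K /\ approx_interpolating_with p K.
Proof.
move=> /lip_interpolating_approx_around[m [r [r0 hm]]].
by exists (m.+1%:R / r); split; [rewrite divr_gt0 | exact: approx_around_scale].
Qed.

Lemma approx_interpolating_series p K s a : approx_interpolating_with p K ->
  0 < s -> (forall i, `|a i| <= s) ->
  exists f : nat -> X -> R, (forall n, lip0_le (f n) (K * s / 2 ^+ n)) /\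
    forall n i, `|a i - \sum_(k < n) molecule d (p i) (f k)| <= s / 2 ^+ n.
Proof.
move=> p_approx s0 sa.
pose sc n := s / 2 ^+ n.
have sc0 n : 0 < sc n by rewrite divr_gt0 ?exprn_gt0.
have /choice[g gP] : forall nb : nat * (I -> R), exists f,
    (forall i, `|nb.2 i| <= sc nb.1) -> lip0_le f (K * sc nb.1) /\
      forall i, `|nb.2 i - molecule d (p i) f| <= sc nb.1.+1.
  move=> [n b] /=; have [bn|nbn] := pselect (forall i, `|b i| <= sc n); last first.
    by exists (fun=> 0) => /nbn.
  have [f hf] := p_approx _ _ (sc0 n) bn; exists f.
  by move=> _; rewrite (_ : sc n.+1 = sc n / 2) // /sc exprSr invfM mulrA.
pose fix res n := if n is k.+1
  then (fun i => res k i - molecule d (p i) (g (k, res k))) else a.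
have res_le n i : `|res n i| <= sc n.
  elim: n i => [|n IH] i; first by rewrite /sc expr0 divr1.
  exact: (gP (n, res n) IH).2 i.
pose f n := g (n, res n).
exists f; split.
  by move=> n; rewrite -mulrA; exact: (gP (n, res n) (res_le n)).1.
move=> n i; suff -> : a i - \sum_(k < n) molecule d (p i) (f k) = res n i.
  exact: res_le.
elim: n => [|n IH]; first by rewrite big_ord0 subr0.
by rewrite big_ord_recr /= opprD addrA IH.
Qed.

Lemma approx_interpolating_exact p K : 0 <= K ->
  approx_interpolating_with p K -> interpolating_with p (2 * K).
Proof.
move=> K0 p_approx s a s0 sa.
have [f [fK fa]] := approx_interpolating_series p_approx s0 sa.
have [F [FK FS]] := lip0_series (mulr_ge0 K0 (ltW s0)) fK.
exists F; split; first by rewrite -mulrA.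
move=> i; apply/eqP; rewrite -subr_eq0 -normr_le0.
set u := p i; set D := (d u.1 x0 + d u.2 x0) / d u.1 u.2.
apply: (@le_of_le_add_halfn _ _ 0 (2 * (K * s) * D + s)) => n.
pose S x := \sum_(k < n) f k x.
have -> : molecule d u F - a i =
    (molecule d u F - molecule d u S) - (a i - \sum_(k < n) molecule d u (f k)).
  by rewrite molecule_sum; ring.
apply: le_trans (ler_normB _ _) _.
have -> : 0 + (2 * (K * s) * D + s) / 2 ^+ n = 2 * (K * s) / 2 ^+ n * D + s / 2 ^+ n.
  by rewrite /D; ring.
apply: lerD (fa n i); rewrite /D (mulrA (2 * (K * s) / 2 ^+ n)).
exact: (molecule_dist (g := S) u (FS n)).
Qed.

Lemma interpolating_with_perturb p q K : 0 < K -> interpolating_with p K ->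
  (forall i, rho d x0 (p i) (q i) <= (2 * K)^-1) -> approx_interpolating_with q K.
Proof.
move=> K0 p_interp pq s a s0 sa.
have [f [fK fa]] := p_interp s a s0 sa.
have Ks0 : 0 < K * s by rewrite mulr_gt0.
exists f; split=> // i; rewrite -fa.
apply: le_trans (molecule_rho _ _ Ks0 fK) _.
apply: le_trans (ler_wpM2r (ltW Ks0) (pq i)) _.
by rewrite invfM -mulrA mulKf ?gt_eqF // mulrC.
Qed.

Lemma interpolating_with_lip p K : interpolating_with p K -> lip_interpolating d x0 p.
Proof.
move=> p_interp a [M aM].
have M1 : 0 < `|M| + 1 by rewrite ltr_wpDl.
have aM1 i : `|a i| <= `|M| + 1 := le_trans (aM i) (ler_wpDr ler01 (ler_norm M)).
have [f [fK fa]] := p_interp _ a M1 aM1.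
by exists f; split=> //; exact: lip0_le_lip0 fK.
Qed.

End LipschitzInterpolation.

Theorem proposition3p21 (R : realType) (X : Type) (d : X -> X -> R) (x0 : X)
  (I : Type) (p : I -> X * X) :
  is_metric d ->
  (forall i, (p i).1 <> (p i).2) ->
  lip_interpolating d x0 p ->
  exists delta : R, 0 < delta /\
    forall q : I -> X * X,
      (forall i, (q i).1 <> (q i).2) ->
      (forall i, rho d x0 (p i) (q i) < delta) ->
      lip_interpolating d x0 q.
Proof.
move=> d_metric _ p_interp.
have [K [K0 p_approx]] := lip_interpolating_approx d_metric p_interp.
have p_exact := approx_interpolating_exact d_metric (ltW K0) p_approx.
exists (4 * K)^-1; split; first by rewrite invr_gt0 mulr_gt0.
move=> q _ pq.
have K20 : 0 < 2 * K by rewrite mulr_gt0.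
have q_approx : approx_interpolating_with d x0 q (2 * K).
  apply: (interpolating_with_perturb d_metric K20 p_exact) => i.
  by rewrite mulrA -natrM ltW.
have q_exact := approx_interpolating_exact d_metric (ltW K20) q_approx.
exact: interpolating_with_lip q_exact.
Qed.
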